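(* Let $V=\mathbb{C}^4$, with basis $e_1,\dots,e_4$ and dual basis $\alpha_1,\dots,\alpha_4$. Let $$T_4=\sum_{1\le i<j\le 4}\big(\alpha_i\otimes\alpha_j-\alpha_j\otimes\alpha_i\big)\otimes(e_i\wedge e_j)\in V^*\otimes V^*\otimes\Lambda^2V\cong\mathbb{C}^4\otimes\mathbb{C}^4\otimes\mathbb{C}^6.$$ Then $\underline{R}(T_4)=8$.
   Context: The border rank $\underline{R}(T)$ is the smallest $r$ such that $T$ is a limit of sums of $r$ rank-one tensors. *)

From HB Require Import structures.
From mathcomp Require Import all_boot all_order all_algebra.
From mathcomp Require Import reals.
From mathcomp Require Export complex.
Set Implicit Arguments. Unset Strict Implicit. Unset Printing Implicit Defensive.
Import Order.TTheory GRing.Theory Num.Theory.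
Local Open Scope ring_scope.

Definition tensor (F : Type) (I J K : finType) := I -> J -> K -> F.

Definition rank_le (F : nzRingType) (I J K : finType) (r : nat)
  (T : tensor F I J K) : Prop :=
  exists (a : 'I_r -> I -> F) (b : 'I_r -> J -> F) (c : 'I_r -> K -> F),
    forall i j k, T i j k = \sum_(l < r) a l i * b l j * c l k.

(* T is a limit of sums of r rank-one tensors (Euclidean topology,
   expressed with the entrywise sup-norm). *)
Definition border_rank_le (F : numFieldType) (I J K : finType) (r : nat)
  (T : tensor F I J K) : Prop :=
  forall eps : F, 0 < eps ->
    exists T' : tensor F I J K, rank_le r T' /\
      forall i j k, `|T i j k - T' i j k| < eps.

(* Index set {(i,j) : i < j} of the basis e_i /\ e_j of Lambda^2 C^4. *)
Definition pair4 := {p : 'I_4 * 'I_4 | (p.1 < p.2)%N}.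

Definition T4 (R : rcfType) : tensor R[i] 'I_4 'I_4 pair4 :=
  fun a b k =>
    if (a, b) == val k then 1
    else if (b, a) == val k then -1
    else 0.

(* Lower bound: the Koszul flattening of T in A (x) B (x) C, A = C^4, is the map
   Lambda^2 A (x) B^* -> Lambda^3 A (x) C,
   x (x) beta |-> sum_i (x /\ a_i) (x) T(a_i, beta, .).
   For a rank-one tensor a (x) b (x) c it factors through x |-> x /\ a, whose kernel
   contains a, so it has rank at most 3.  For T4 it is a 24 x 24 matrix K with
   inverse (K^T + E)/2 for an explicit sign matrix E.  Full rank survives small
   perturbations, so a tensor of rank r close enough to T4 gives 24 <= 3 r.
   Upper bound: eight rank-one tensors whose entries are Laurent polynomials in t
   sum to T4 + O(t). *)

From HB Require Import structures.
From mathcomp Require Import all_boot all_order all_algebra.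
From mathcomp Require Import reals complex.
From mathcomp Require Import ring zify.
Import Order.TTheory GRing.Theory Num.Theory.
Local Open Scope ring_scope.
Set Implicit Arguments. Unset Strict Implicit. Unset Printing Implicit Defensive.

Lemma sum_enum_val (R : nmodType) (T : finType) (f : T -> R) :
  \sum_(q < #|{: T}|) f (enum_val q) = \sum_x f x.
Proof. by rewrite -big_enum_val. Qed.

Lemma sum_antisym_eq0 (F : numFieldType) (I : finType) (f : I -> I -> F)
    (x : I -> F) :
  (forall i m, f i m = - f m i) -> \sum_i \sum_m f i m * x i * x m = 0.
Proof.
move=> f_antisym; set s := LHS; apply/eqP.
suff : s *+ 2 == 0 by rewrite mulrn_eq0.
rewrite mulr2n {2}/s exchange_big /= -big_split big1 // => i _.
rewrite -big_split big1 // => m _ /=.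
by rewrite f_antisym mulNr mulrAC mulNr addNr.
Qed.

Lemma mxrank_sum_le (F : fieldType) m n r (A : 'I_r -> 'M[F]_(m, n)) :
  (\rank (\sum_l A l)%R <= \sum_l \rank (A l))%N.
Proof.
elim/big_ind2: _ => [|B1 k1 B2 k2 le1 le2|l _]; rewrite ?mxrank0 //.
exact: leq_trans (mxrank_add _ _) (leq_add le1 le2).
Qed.

Lemma lt1_div_add1 (F : numFieldType) (x : F) : 0 <= x -> x / (x + 1) < 1.
Proof. by move=> x_ge0; rewrite ltr_pdivrMr ?mul1r ?ltrDl ?ltr01 ?ltr_wpDl. Qed.

Lemma ge0_div_add1 (F : numFieldType) (x : F) : 0 <= x -> 0 <= x / (x + 1).
Proof. by move=> x_ge0; rewrite divr_ge0 ?addr_ge0. Qed.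

Lemma row_free_perturb (F : numFieldType) m n (M M' : 'M[F]_(m, n))
    (N : 'M[F]_(n, m)) (e : F) :
  M *m N = 1%:M -> e * \sum_q \sum_r `|N q r| < 1 ->
  (forall i j, `|M' i j - M i j| <= e) -> row_free M'.
Proof.
move=> MN small close; apply: inj_row_free => y yM'.
pose s := \sum_p `|y 0 p|.
have s_ge0 : 0 <= s by apply: sumr_ge0.
have yE : y = y *m (M - M') *m N by rewrite mulmxBr yM' subr0 -mulmxA MN mulmx1.
have yD_le q : `|(y *m (M - M')) 0 q| <= e * s.
  rewrite mxE mulr_sumr; apply: le_trans (ler_norm_sum _ _ _) _.
  apply: ler_sum => p _; rewrite normrM mulrC !mxE distrC.
  by apply: ler_wpM2r; [exact: normr_ge0 | exact: close].
have y_le r : `|y 0 r| <= e * s * \sum_q `|N q r|.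
  rewrite {1}yE mxE mulr_sumr; apply: le_trans (ler_norm_sum _ _ _) _.
  by apply: ler_sum => q _; rewrite normrM; apply: ler_wpM2r.
have s_le : s <= e * (\sum_q \sum_r `|N q r|) * s.
  rewrite [X in _ <= X]mulrAC exchange_big mulr_sumr.
  by apply: ler_sum => r _; exact: y_le.
have s0 : s = 0.
  apply/eqP; rewrite eq_le s_ge0 andbT.
  have : (1 - e * \sum_q \sum_r `|N q r|) * s <= 0.
    by rewrite mulrBl mul1r subr_le0.
  by rewrite pmulr_rle0 // subr_gt0.
apply/rowP => r; apply/eqP; rewrite mxE -normr_eq0; apply/eqP.
by move/psumr_eq0P: s0 => ->.
Qed.

(* S indexes a basis (e_s) of Lambda^p A and I a basis (a_i) of A; kappa s i m
   is the coordinate of e_s /\ a_i on the m-th vector of a basis of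
   Lambda^(p+1) A = A^* (p + 1 = dim A - 1). *)
Section Koszul.
Variables (F : numFieldType) (I J K S : finType) (kappa : S -> I -> I -> F).
Hypothesis kappa_antisym : forall s i m, kappa s i m = - kappa s m i.

Definition koszul_entry (T : tensor F I J K) (x : S * J) (y : I * K) : F :=
  \sum_i kappa x.1 i y.1 * T i x.2 y.2.

Definition koszul (T : tensor F I J K) : 'M[F]_(#|{: S * J}|, #|{: I * K}|) :=
  \matrix_(p, q) koszul_entry T (enum_val p) (enum_val q).

Lemma rank_koszul_rank_one (a : I -> F) (b : J -> F) (c : K -> F) :
  (\rank (koszul (fun i j k => (a i * b j * c k)%R)) <= #|I|.-1)%N.
Proof.
pose X : 'M[F]_(#|{: S * J}|, #|{: I}|) := \matrix_(p, q)
  ((\sum_i kappa (enum_val p).1 i (enum_val q) * a i) * b (enum_val p).2).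
pose Y : 'M[F]_(#|{: I}|, #|{: I * K}|) := \matrix_(q, q')
  ((enum_val q == (enum_val q').1)%:R * c (enum_val q').2).
have -> : koszul (fun i j k => a i * b j * c k) = X *m Y.
  apply/matrixP => p q'; rewrite !mxE; under [RHS]eq_bigr do rewrite !mxE.
  rewrite (bigD1 (enum_rank (enum_val q').1)) //= enum_rankK eqxx mul1r.
  rewrite [X in _ + X]big1 ?addr0 => [|q qm]; last first.
    have /negbTE -> : enum_val q != (enum_val q').1.
      by apply: contra qm => /eqP <-; rewrite enum_valK.
    by rewrite mul0r mulr0.
  by rewrite !mulr_suml; apply: eq_bigr => i _; rewrite !mulrA mulrAC.
apply: leq_trans (mxrankM_maxl _ _) _.
(* a lies in the kernel of X, since a /\ a = 0. *)
pose v : 'cV[F]_#|{: I}| := \col_q a (enum_val q).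
have Xv : X *m v = 0.
  apply/matrixP => p z; rewrite !mxE; under eq_bigr do rewrite !mxE mulrAC.
  rewrite -mulr_suml (sum_enum_val (fun m => (\sum_i kappa _ i m * a i) * a m)).
  under eq_bigr do rewrite mulr_suml.
  by rewrite exchange_big sum_antisym_eq0 ?mul0r.
have [v0 | vn0] := eqVneq v 0.
  suff -> : X = 0 by rewrite mxrank0.
  apply/matrixP => p q; rewrite !mxE big1 ?mul0r // => i _.
  move/matrixP/(_ (enum_rank i) 0): v0.
  by rewrite !mxE enum_rankK => ->; rewrite mulr0.
have := mulmx0_rank_max Xv.
have : (0 < \rank v)%N by rewrite lt0n mxrank_eq0.
by move: (\rank X) (\rank v) => x y; lia.
Qed.

Lemma rank_koszul_le r (T : tensor F I J K) :
  rank_le r T -> (\rank (koszul T) <= #|I|.-1 * r)%N.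
Proof.
case=> a [b [c Tabc]].
have -> : koszul T = \sum_(l < r) koszul (fun i j k => a l i * b l j * c l k).
  apply/matrixP => p q; rewrite summxE mxE; under [RHS]eq_bigr do rewrite mxE.
  rewrite /koszul_entry exchange_big; apply: eq_bigr => i _.
  by rewrite Tabc mulr_sumr.
apply: leq_trans (mxrank_sum_le _) _.
rewrite mulnC -[X in (_ <= X * _)%N]card_ord -sum_nat_const.
by apply: leq_sum => l _; exact: rank_koszul_rank_one.
Qed.

Lemma row_free_koszul (T : tensor F I J K) (N : I * K -> S * J -> F) :
  (forall x x', \sum_y koszul_entry T x y * N y x' = (x == x')%:R) ->
  row_free (koszul T).
Proof.
move=> TN; apply/row_freeP; exists (\matrix_(q, p) N (enum_val q) (enum_val p)).
apply/matrixP => p p'; rewrite !mxE; under eq_bigr do rewrite !mxE.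
rewrite (sum_enum_val (fun y => koszul_entry T _ y * N y _)) TN.
by rewrite (inj_eq enum_val_inj).
Qed.

Hypothesis kappa_le1 : forall s i m, `|kappa s i m| <= 1.

Lemma koszul_close (T T' : tensor F I J K) (e : F) :
  (forall i j k, `|T' i j k - T i j k| <= e) ->
  forall p q, `|koszul T' p q - koszul T p q| <= #|I|%:R * e.
Proof.
move=> close p q; rewrite !mxE -sumrB.
have -> : #|I|%:R * e = \sum_(i : I) e by rewrite sumr_const mulr_natl.
apply: le_trans (ler_norm_sum _ _ _) _; apply: ler_sum => i _.
rewrite -mulrBr normrM -[e]mul1r.
by apply: ler_pM; rewrite ?normr_ge0.
Qed.

Theorem koszul_border_rank_ge r (T : tensor F I J K) :
  row_free (koszul T) -> border_rank_le r T -> (#|{: S * J}| <= #|I|.-1 * r)%N.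
Proof.
case/row_freeP => N TN brT.
set c := \sum_q \sum_p `|N q p|.
have c_ge0 : 0 <= c by do 2![apply: sumr_ge0 => ? _].
pose e : F := (#|I|%:R + 1)^-1 * (c + 1)^-1.
have e_gt0 : 0 < e by rewrite mulr_gt0 // invr_gt0 ltr_wpDl // ler0n.
have [T' [T'r close]] := brT e e_gt0.
suff : row_free (koszul T') by rewrite /row_free => /eqP <-; exact: rank_koszul_le.
apply: (row_free_perturb TN (e := #|I|%:R * e)); last first.
  by apply: koszul_close => i j k; rewrite distrC ltW.
have -> : #|I|%:R * e * c = #|I|%:R / (#|I|%:R + 1) * (c / (c + 1)).
  by rewrite /e; ring.
by apply: mulr_ilt1; rewrite ?lt1_div_add1 ?ge0_div_add1 ?ler0n.
Qed.

End Koszul.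

Lemma border_rank_le_approx (F : numFieldType) (I J K : finType) r
    (T : tensor F I J K) (c : F) :
  0 <= c ->
  (forall t, 0 < t <= 1 -> exists2 T', rank_le r T' &
     forall i j k, `|T' i j k - T i j k| <= t * c) ->
  border_rank_le r T.
Proof.
move=> c_ge0 approx eps eps_gt0.
pose t := eps / (eps + 1) / (c + 1).
have c1_gt0 : 0 < c + 1 by rewrite ltr_wpDl.
have t_gt0 : 0 < t by rewrite !divr_gt0 // ltr_wpDl // ltW.
have t_le1 : t <= 1.
  apply: mulr_ile1.
  - exact/ge0_div_add1/ltW.
  - by rewrite invr_ge0 ltW.
  - exact/ltW/lt1_div_add1/ltW.
  - by rewrite invf_le1 // ler_wpDl.
have tc_lt : t * c < eps.
  have -> : t * c = eps * ((eps + 1)^-1 * (c / (c + 1))) by rewrite /t; ring.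
  rewrite gtr_pMr //; apply: mulr_ilt1.
  - by rewrite invr_ge0 addr_ge0 // ltW.
  - exact: ge0_div_add1.
  - by rewrite invf_lt1 ?ltr_pwDl // addr_gt0.
  - exact: lt1_div_add1.
have [T' T'r close] := approx t (introT andP (conj t_gt0 t_le1)).
exists T'; split => // i j k.
by rewrite distrC; apply: le_lt_trans (close i j k) tc_lt.
Qed.

Lemma big_pair4 (R : Type) (idx : R) (op : Monoid.com_law idx)
    (F : nat -> nat -> R) :
  \big[op/idx]_(k : pair4) F (val k).1 (val k).2 =
  \big[op/idx]_(0 <= u < 4) \big[op/idx]_(0 <= v < 4 | (u < v)%N) F u v.
Proof.
under eq_bigr do rewrite big_mkord.
rewrite big_mkord pair_big_dep /=.
rewrite (reindex_omap (val : pair4 -> 'I_4 * 'I_4) insub) => [|p Pp]; last first.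
  by rewrite insubT.
apply: eq_bigl => -[p Pp] /=.
by rewrite Pp (insubT (fun x : 'I_4 * 'I_4 => (x.1 < x.2)%N) Pp) /=; apply/esym/eqP.
Qed.

Definition levi_civita (a b c d : nat) : int :=
  sgz ((b%:Z - a%:Z) * (c%:Z - a%:Z) * (d%:Z - a%:Z) *
       (c%:Z - b%:Z) * (d%:Z - b%:Z) * (d%:Z - c%:Z)).

Lemma levi_civitaC a b c d : levi_civita a b c d = - levi_civita a b d c.
Proof. by rewrite /levi_civita -sgzN; congr sgz; ring. Qed.

Lemma norm_levi_civita_le1 a b c d : `|levi_civita a b c d| <= 1.
Proof. by rewrite normr_sgz; case: (_ != 0). Qed.

(* T4 and its Koszul flattening on nat indices, where vm_compute can enumerate
   them: it cannot enumerate 'I_n, whose elements are built with the opaque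
   insub. *)
Definition t4z (a b u v : nat) : int :=
  if (a == u) && (b == v) then 1 else if (b == u) && (a == v) then -1 else 0.

Lemma T4E (R : rcfType) (a b : 'I_4) (k : pair4) :
  T4 R a b k = (t4z a b (val k).1 (val k).2)%:~R.
Proof.
rewrite /T4 /t4z.
have -> : ((a, b) == val k) = (a == (val k).1 :> nat) && (b == (val k).2 :> nat) by [].
have -> : ((b, a) == val k) = (b == (val k).1 :> nat) && (a == (val k).2 :> nat) by [].
by do !case: ifP.
Qed.

Definition koszul_T4_entry (p q b m u v : nat) : int :=
  \sum_(0 <= i < 4) levi_civita p q i m * t4z i b u v.

(* The inverse of the Koszul flattening K of T4 is (K^T + E)/2, where E is given
   by koszul_T4_correction. *)
Definition koszul_T4_correction (p q b m u v : nat) : int :=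
  (b == m)%:R * levi_civita p q u v.

Definition koszul_T4_inverse_check : bool :=
  all (fun p : nat => all (fun q : nat => all (fun b : nat =>
  all (fun p' : nat => all (fun q' : nat => all (fun b' : nat =>
    if (p < q)%N && (p' < q')%N then
      \sum_(0 <= m < 4) \sum_(0 <= u < 4) \sum_(0 <= v < 4 | (u < v)%N)
        koszul_T4_entry p q b m u v *
        (koszul_T4_entry p' q' b' m u v + koszul_T4_correction p' q' b' m u v)
      == 2 * [&& p == p', q == q' & b == b']%:R
    else true)
  (iota 0 4)) (iota 0 4)) (iota 0 4)) (iota 0 4)) (iota 0 4)) (iota 0 4).

Lemma koszul_T4_inverse_checkP : koszul_T4_inverse_check.
Proof. by rewrite /koszul_T4_inverse_check /koszul_T4_entry unlock; vm_compute. Qed.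

Lemma mem_iota4 (i : 'I_4) : (i : nat) \in iota 0 4.
Proof. by rewrite mem_iota add0n ltn_ord. Qed.

Lemma sum_koszul_cols (V : nmodType) (H : nat -> nat -> nat -> V) :
  \sum_(y : 'I_4 * pair4) H y.1 (val y.2).1 (val y.2).2 =
  \sum_(0 <= m < 4) \sum_(0 <= u < 4) \sum_(0 <= v < 4 | (u < v)%N) H m u v.
Proof.
rewrite -(pair_bigA _ (fun (m : 'I_4) (k : pair4) => H m (val k).1 (val k).2)) /=.
by rewrite big_mkord; apply: eq_bigr => m _; rewrite big_pair4.
Qed.

Lemma card_koszul_rows : #|{: pair4 * 'I_4}| = 24%N.
Proof.
rewrite card_prod card_ord -sum1_card (eq_bigl xpredT) //.
by rewrite (big_pair4 _ (fun _ _ => 1%N)) unlock.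
Qed.

Section KoszulT4.
Variable R : rcfType.

Definition kappa4 (s : pair4) (i m : 'I_4) : R[i] :=
  (levi_civita (val s).1 (val s).2 i m)%:~R.

Lemma kappa4_antisym s i m : kappa4 s i m = - kappa4 s m i.
Proof. by rewrite /kappa4 levi_civitaC rmorphN. Qed.

Lemma kappa4_le1 s i m : `|kappa4 s i m| <= 1.
Proof. by rewrite /kappa4 -intr_norm -[1]/(1%:~R) ler_int norm_levi_civita_le1. Qed.

Lemma koszul_T4_entryE x y :
  koszul_entry kappa4 (T4 R) x y =
  (koszul_T4_entry (val x.1).1 (val x.1).2 x.2 y.1 (val y.2).1 (val y.2).2)%:~R.
Proof.
rewrite /koszul_T4_entry big_mkord rmorph_sum; apply: eq_bigr => i _.
by rewrite T4E rmorphM.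
Qed.

Lemma koszul_T4_row_free : row_free (koszul kappa4 (T4 R)).
Proof.
pose E (y : 'I_4 * pair4) (x : pair4 * 'I_4) : R[i] :=
  (koszul_T4_correction (val x.1).1 (val x.1).2 x.2 y.1 (val y.2).1 (val y.2).2)%:~R.
apply: (row_free_koszul (N := fun y x => (koszul_entry kappa4 (T4 R) x y + E y x) / 2)).
move=> [s b] [s' b'].
under eq_bigr do rewrite !koszul_T4_entryE -intrD mulrA -intrM.
rewrite -mulr_suml -rmorph_sum /=.
have := koszul_T4_inverse_checkP.
move=> /allP/(_ _ (mem_iota4 (val s).1)) /allP/(_ _ (mem_iota4 (val s).2)).
move=> /allP/(_ _ (mem_iota4 b)) /allP/(_ _ (mem_iota4 (val s').1)).
move=> /allP/(_ _ (mem_iota4 (val s').2)) /allP/(_ _ (mem_iota4 b')).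
rewrite (valP s) (valP s') /= -sum_koszul_cols => /eqP ->.
rewrite rmorphM !rmorph_nat mulrC mulKf ?pnatr_eq0 //.
rewrite -[(s, b) == _]/((s == s') && (b == b')).
by rewrite -[s == s']/(((val s).1 == (val s').1) && ((val s).2 == (val s').2)) -andbA.
Qed.
End KoszulT4.

(* Integer polynomials as coefficient lists (lowest degree first), so that the
   polynomial identities below are decided by computation. *)
Fixpoint padd (p q : seq int) : seq int :=
  match p, q with
  | a :: p', b :: q' => a + b :: padd p' q'
  | [::], _ => q
  | _, [::] => p
  end.

Fixpoint pmul (p q : seq int) : seq int :=
  if p is a :: p' then padd [seq a * b | b <- q] (0 :: pmul p' q) else [::].

Definition peval (R : pzRingType) (p : seq int) (x : R) : R :=
  foldr (fun a v => a%:~R + x * v) 0 p.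

Definition pnorm (p : seq int) : nat := sumn [seq absz a | a <- p].

Section PolyEval.
Variable R : comPzRingType.
Implicit Types (p q : seq int) (x : R).

Lemma peval_add p q x : peval (padd p q) x = peval p x + peval q x.
Proof. by elim: p q => [|a p IH] [|b q] /=; rewrite ?add0r ?addr0 // IH intrD; ring. Qed.

Lemma peval_scale a q x : peval [seq a * b | b <- q] x = a%:~R * peval q x.
Proof. by elim: q => [|b q IH] /=; rewrite ?mulr0 // IH intrM; ring. Qed.

Lemma peval_mul p q x : peval (pmul p q) x = peval p x * peval q x.
Proof.
by elim: p => [|a p IH] /=; rewrite ?mul0r // peval_add peval_scale /= IH; ring.
Qed.

Lemma peval_nseq0 n p x : peval (nseq n 0 ++ p) x = x ^+ n * peval p x.
Proof. by elim: n => [|n IH] /=; rewrite ?mul1r // IH exprS; ring. Qed.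

Lemma peval_foldr_padd p0 (ps : seq (seq int)) x :
  peval (foldr padd p0 ps) x = peval p0 x + \sum_(p <- ps) peval p x.
Proof.
by elim: ps => [|p ps IH] /=; rewrite ?big_nil ?addr0 // big_cons peval_add IH addrCA.
Qed.

End PolyEval.

Lemma norm_peval_le (R : numDomainType) p (x : R) :
  `|x| <= 1 -> `|peval p x| <= (pnorm p)%:R.
Proof.
move=> x_le1; elim: p => [|a p IH] /=; first by rewrite normr0.
rewrite natrD; apply: le_trans (ler_normD _ _) _.
rewrite natr_absz intr_norm lerD2l normrM -[X in _ <= X]mul1r.
by apply: ler_pM; rewrite ?normr_ge0.
Qed.

(* Entry l of degen_a, degen_b, degen_c lists the coefficients of the l-th
   rank-one term; the true third factor is degen_c / (64 t^6), with the
   coordinates of Lambda^2 C^4 in the order of pair4_list. *)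
Definition degen_a : seq (seq (seq int)) := [::
  [:: [:: 1]; [::]; [::]; [::]];
  [:: [:: 1]; [::]; [:: 0; 0; 0; 0; 1]; [::]];
  [:: [:: 1]; [::]; [::]; [:: 0; 0; 0; 0; 1]];
  [:: [::]; [:: 1; 4]; [:: 0; 4]; [::]];
  [:: [::]; [:: 1; 4]; [:: 0; 4; 0; 0; 1]; [::]];
  [:: [::]; [:: 1; 4]; [:: 0; 4]; [:: 0; 0; 0; 0; 1; 4]];
  [:: [:: 1; 3]; [:: 1]; [::]; [:: 0; -4]];
  [:: [:: 1; 3]; [:: -1]; [:: 0; -4]; [::]]].

Definition degen_b : seq (seq (seq int)) := [::
  [:: [:: 1]; [::]; [::]; [::]];
  [:: [:: 1]; [::]; [:: 0; 0; 0; 0; -1; -3]; [:: 0; 0; 0; 0; 0; -3]];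
  [:: [:: 1]; [::]; [::]; [:: 0; 0; 0; 0; -1]];
  [:: [::]; [:: 1; -4]; [:: 0; -4]; [::]];
  [:: [::]; [:: 1; -4]; [:: 0; -4; 0; 0; -1; -8]; [::]];
  [:: [::]; [:: 1; -4; 0; 0; 0; -8]; [:: 0; -4]; [:: 0; 0; 0; 0; -1; 4]];
  [:: [:: 1]; [:: -1]; [:: 0; 4]; [::]];
  [:: [:: 1]; [:: 1]; [::]; [:: 0; 4]]].

Definition degen_c : seq (seq (seq int)) := [::
  [:: [:: 0; 0; 0; 0; 0; 0; 64]; [:: 0; 0; 64]; [:: 0; 0; 64];
      [::]; [:: 0; 0; 128; 0; 0; 32; 96]; [:: 8; 0; -128; 2; 6; -32; -96]];
  [:: [::]; [:: 0; 0; -64]; [::];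
      [::]; [:: 0; 0; -64]; [:: -4; 0; 64]];
  [:: [::]; [::]; [:: 0; 0; -64];
      [::]; [:: 0; 0; -64]; [:: -4; 0; 64]];
  [:: [:: 0; 0; 0; 0; 0; 0; -64]; [::]; [::];
      [:: 0; 0; 64]; [:: 0; 0; -64; 0; 0; -32]; [:: -8; 16; 0; -2; 0; 32; 128]];
  [:: [::]; [::]; [::];
      [:: 0; 0; -64]; [:: 0; 0; 64]; [:: 4; -16]];
  [:: [::]; [::]; [::];
      [::]; [::]; [:: 4]];
  [:: [:: 0; 0; 0; 0; 0; 0; -64]; [::]; [::];
      [::]; [:: 0; 0; 0; 0; 0; -16]; [:: 0; 0; 0; -1; 0; 16]];
  [:: [::]; [::]; [::];
      [::]; [:: 0; 0; 0; 0; 0; -16]; [:: 0; 0; 0; -1; 0; 16]]].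

Definition pair4_list : seq (nat * nat) :=
  [:: (0, 1); (0, 2); (0, 3); (1, 2); (1, 3); (2, 3)]%N.

Definition degen_coef (d : seq (seq (seq int))) (l i : nat) : seq int :=
  nth [::] (nth [::] d l) i.

(* Starting the sum from seven zeros makes every degen_poly long enough for the
   comparison in degen_check. *)
Definition degen_poly (i j u v : nat) : seq int :=
  foldr padd (nseq 7 0) [seq pmul (pmul (degen_coef degen_a l i)
    (degen_coef degen_b l j)) (degen_coef degen_c l (index (u, v) pair4_list))
    | l <- iota 0 8].

Definition degen_check : bool :=
  all (fun i => all (fun j => all (fun u => all (fun v =>
    if (u < v)%N then
      (degen_poly i j u v ==
         nseq 6 0 ++ 64 * t4z i j u v :: drop 7 (degen_poly i j u v)) &&
      (pnorm (drop 7 (degen_poly i j u v)) <= 49 * 64)%N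
    else true)
  (iota 0 4)) (iota 0 4)) (iota 0 4)) (iota 0 4).

Lemma degen_checkP : degen_check.
Proof. by vm_compute. Qed.

Section Degeneration.
Variable R : rcfType.

Definition degen_factor (d : seq (seq (seq int))) (t : R[i]) (l i : nat) : R[i] :=
  peval (degen_coef d l i) t.

Definition pair4_index (k : pair4) : nat :=
  index ((val k).1 : nat, (val k).2 : nat) pair4_list.

Definition degen_T4 (t : R[i]) : tensor R[i] 'I_4 'I_4 pair4 := fun i j k =>
  \sum_(l < 8) degen_factor degen_a t l i * degen_factor degen_b t l j *
    (degen_factor degen_c t l (pair4_index k) / (64 * t ^+ 6)).

Lemma rank_degen_T4 t : rank_le 8 (degen_T4 t).
Proof.
exists (fun (l : 'I_8) (i : 'I_4) => degen_factor degen_a t l i).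
exists (fun (l : 'I_8) (j : 'I_4) => degen_factor degen_b t l j).
by exists (fun (l : 'I_8) k => degen_factor degen_c t l (pair4_index k) / (64 * t ^+ 6)).
Qed.

Lemma degen_T4E t i j k :
  degen_T4 t i j k = peval (degen_poly i j (val k).1 (val k).2) t / (64 * t ^+ 6).
Proof.
rewrite /degen_poly peval_foldr_padd -[nseq 7 0]cats0 peval_nseq0.
rewrite [peval [::] _]/= mulr0 add0r big_map mulr_suml.
rewrite -[iota 0 8]/(index_iota 0 8) big_mkord.
by apply: eq_bigr => l _; rewrite !peval_mul mulrA.
Qed.

Lemma degen_T4_close t i j k :
  0 < t <= 1 -> `|degen_T4 t i j k - T4 R i j k| <= t * 49%:R.
Proof.
case/andP => t_gt0 t_le1.
have := degen_checkP.
move=> /allP/(_ _ (mem_iota4 i)) /allP/(_ _ (mem_iota4 j)).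
move=> /allP/(_ _ (mem_iota4 (val k).1)) /allP/(_ _ (mem_iota4 (val k).2)).
rewrite (valP k) => /andP[/eqP P_eq P_norm].
rewrite degen_T4E P_eq peval_nseq0 /= T4E.
set E := drop 7 _.
have t_neq0 : t != 0 by rewrite gt_eqF.
have -> : t ^+ 6 * ((64 * t4z i j (val k).1 (val k).2)%:~R + t * peval E t) /
    (64 * t ^+ 6) - (t4z i j (val k).1 (val k).2)%:~R = t * (peval E t / 64).
  by rewrite intrM; field; exact: t_neq0.
rewrite normrM gtr0_norm // ler_wpM2l ?(ltW t_gt0) // normrM normfV normr_nat.
rewrite ler_pdivrMr ?ltr0n // -natrM; apply: le_trans (norm_peval_le _ _) _.
  by rewrite gtr0_norm.
by rewrite ler_nat.
Qed.
End Degeneration.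

Lemma border_rank_T4_le8 (R : rcfType) : border_rank_le 8 (T4 R).
Proof.
apply: (border_rank_le_approx (c := 49%:R)) => [|t t_range]; first exact: ler0n.
exists (degen_T4 t); first exact: rank_degen_T4.
by move=> i j k; exact: degen_T4_close.
Qed.

Theorem proposition6 (R : realType) :
  border_rank_le 8 (T4 R) /\
  (forall r : nat, border_rank_le r (T4 R) -> (8 <= r)%N).
Proof.
split; first exact: border_rank_T4_le8.
move=> r /(koszul_border_rank_ge (kappa4_antisym R) (kappa4_le1 R)).
move=> /(_ (koszul_T4_row_free R)).
by rewrite card_koszul_rows card_ord; lia.
Qed.
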